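(* Let $\mathbb{Z}_{(p_n)}$ be an odometer with scale $(p_n)$ and let $m\in\mathbb{N}$. (i) If $\gcd(m,p_n)=1$ for all $n\in\mathbb{N}$, then $(\mathbb{Z}_{(p_n)},+\mathbf{m})$ is conjugate to $(\mathbb{Z}_{(p_n)},+\mathbf{1})$ and $\operatorname{Aut}(\mathbb{Z}_{(p_n)},+\mathbf{m})\cong\mathbb{Z}_{(p_n)}$. (ii) Suppose $\gcd(p_n,m)\neq1$ for some $n\in\mathbb{N}$. Let $m=a_1^{b_1}a_2^{b_2}\cdots a_l^{b_l}$ be the prime factorization of $m$, set $r_i=\min\{b_i,\mathbf{v}_{a_i}((p_n))\}$, $s=a_1^{r_1}\cdots a_l^{r_l}$ and $t=m/s$. Then there exists $k\in\mathbb{N}$ such that $s\mid p_k$ and $$\operatorname{Aut}(\mathbb{Z}_{(p_n)},+\mathbf{m})\subseteq\operatorname{Aut}(\mathbb{Z}_{(p_n)},+(t p_k)\mathbf{1})=\operatorname{Aut}(\mathbb{Z}_{(p_n)},+p_k\mathbf{1}).$$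
   Context: A scale is a sequence $(p_n)$ of positive integers with $p_n\mid p_{n+1}$, not eventually constant. The odometer is $\mathbb{Z}_{(p_n)}=\{(x_n)\in\prod_n\mathbb{Z}/p_n\mathbb{Z}: x_{n+1}\equiv x_n\bmod p_n\}$, a compact group; $\mathbf{1}=(1,1,\dots)$ and $\mathbf{m}=m\mathbf{1}$; $(\mathbb{Z}_{(p_n)},+\mathbf{m})$ denotes translation by $\mathbf{m}$. For a prime $p$, $\mathbf{v}_p((p_n))=\lim_n\nu_p(p_n)\in\mathbb{N}\cup\{0,\infty\}$ with $\nu_p$ the $p$-adic valuation. $\operatorname{Aut}(X,T)$ is the group of homeomorphisms of $X$ commuting with $T$. *)

From Stdlib Require Import ClassicalEpsilon.
From mathcomp Require Import all_boot.

Set Implicit Arguments.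
Unset Strict Implicit.
Unset Printing Implicit Defensive.

Record scale := Scale {
  sc :> nat -> nat;
  sc_pos : forall n, 0 < sc n;
  sc_dvd : forall n, sc n %| sc n.+1;
  sc_nconst : ~ (exists N, forall n, N <= n -> sc n = sc N)
}.

(* The odometer Z_(p_n): sequences (x_n) with x_n in Z/p_n Z (represented by
   0 <= x_n < p_n) and x_(n+1) = x_n mod p_n. *)
Record odo (P : scale) := Odo {
  oval :> nat -> nat;
  oval_lt : forall n, oval n < P n;
  oval_comp : forall n, oval n.+1 %% P n = oval n
}.

Definition oadd (P : scale) (x y : odo P) : odo P.
Proof.
refine (@Odo P (fun n => (x n + y n) %% P n) _ _).
- by move=> n; rewrite ltn_pmod // sc_pos.
- move=> n; rewrite (modn_dvdm _ (sc_dvd P n)) -[in RHS]modnDm -modnDm !oval_comp.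
  by rewrite modnDm.
Defined.

Definition ocst (P : scale) (k : nat) : odo P.
Proof.
refine (@Odo P (fun n => k %% P n) _ _).
- by move=> n; rewrite ltn_pmod // sc_pos.
- by move=> n; rewrite (modn_dvdm _ (sc_dvd P n)).
Defined.

Definition otr (P : scale) (k : nat) (x : odo P) : odo P := oadd x (ocst P k).

(* Continuity for the product topology of the discrete spaces Z/p_n Z:
   each output coordinate only depends on finitely many input coordinates
   locally (preimages of basic cylinders are open). *)
Definition ocont (P : scale) (f : odo P -> odo P) : Prop :=
  forall (x : odo P) (n : nat), exists N : nat,
    forall y : odo P, (forall i, i <= N -> y i = x i) -> f y n = f x n.

Definition ohomeo (P : scale) (h : odo P -> odo P) : Prop :=
  ocont h /\ exists g : odo P -> odo P, cancel h g /\ cancel g h /\ ocont g.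

Definition oAut (P : scale) (T : odo P -> odo P) (h : odo P -> odo P) : Prop :=
  ohomeo h /\ forall x, h (T x) = T (h x).

Definition oconj (P : scale) (T S : odo P -> odo P) : Prop :=
  exists h : odo P -> odo P, ohomeo h /\ forall x, h (T x) = S (h x).

Definition Aut_iso_odo (P : scale) (T : odo P -> odo P) : Prop :=
  exists phi : odo P -> (odo P -> odo P),
    (forall a, oAut T (phi a)) /\
    (forall h, oAut T h -> exists a, phi a = h) /\
    (forall a b, phi a = phi b -> a = b) /\
    (forall a b, phi (oadd a b) = (phi a) \o (phi b)).

(* extended naturals N u {oo}: None = oo *)
Definition enat := option nat.

(* v_a((p_n)) = lim_n nu_a(p_n) in N u {oo}; the sequence is nondecreasing, so
   the limit is finite iff it is eventually constant. *)
Definition vp (P : scale) (a : nat) : enat :=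
  match excluded_middle_informative
          (exists e N, forall n, N <= n -> logn a (P n) = e) with
  | left H => Some (proj1_sig (constructive_indefinite_description _ H))
  | right _ => None
  end.

Definition emin (b : nat) (v : enat) : nat :=
  match v with Some e => minn b e | None => b end.

Definition s_of (P : scale) (m : nat) : nat :=
  \prod_(a <- primes m) a ^ emin (logn a m) (vp P a).

Definition t_of (P : scale) (m : nat) : nat := m %/ s_of P m.

From mathcomp Require Import all_boot cyclic.
From Stdlib Require Import ProofIrrelevance FunctionalExtensionality.
From Stdlib Require Import Classical ClassicalEpsilon.

Set Implicit Arguments.
Unset Strict Implicit.
Unset Printing Implicit Defensive.

(* A continuous map commuting with x |-> x + g also commutes with x |-> x + y
   for every y in the closure of the multiples of g: approximate y by j g and
   use continuity.  If m is prime to every p_n, it is a unit of the odometer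
   ring, so its multiples are dense: automorphisms of +m are translations, and
   multiplication by m^-1 conjugates +m to +1.  In general, take k so large
   that each nu_{a_i}(p_n), n >= k, is at least r_i and has stopped growing
   when r_i < b_i.  Then s | p_k, t p_k is a multiple of m, and t is prime to
   p_N / p_k for N >= k, which puts p_k in the closure of the multiples of
   t p_k. *)

Lemma expn_totient_inverse m p : 0 < p -> coprime m p ->
  m ^ (totient p).-1 * m = 1 %[mod p].
Proof.
by move=> p_gt0 cop; rewrite -expnSr prednK ?totient_gt0 // Euler_exp_totient.
Qed.

Lemma inverse_modn_uniq a b m p : a * m = 1 %[mod p] -> b * m = 1 %[mod p] ->
  a = b %[mod p].
Proof.
move=> am bm; rewrite -[a]muln1 -[b]muln1 -modnMmr -bm modnMmr mulnCA.
by rewrite -modnMmr am modnMmr.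
Qed.

Section Odometer.
Variable P : scale.

Lemma odo_ext (x y : odo P) : (forall n, x n = y n) -> x = y.
Proof.
case: x y => [x xlt xcomp] [y ylt ycomp] /= exy.
have exy' : x = y by apply: functional_extensionality.
by subst y; f_equal; apply: proof_irrelevance.
Qed.

Lemma dvdn_scale i j : i <= j -> P i %| P j.
Proof.
elim: j => [|j IHj]; first by rewrite leqn0 => /eqP ->.
rewrite leq_eqVlt ltnS => /predU1P [-> //|/IHj dvd_ij].
exact: dvdn_trans dvd_ij (sc_dvd P j).
Qed.

Lemma oval_modn (x : odo P) i j : i <= j -> x j %% P i = x i.
Proof.
elim: j => [|j IHj]; first by rewrite leqn0 => /eqP ->; rewrite modn_small ?oval_lt.
rewrite leq_eqVlt ltnS => /predU1P [->|le_ij]; first by rewrite modn_small ?oval_lt.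
by rewrite -(IHj le_ij) -(oval_comp x j) (modn_dvdm _ (dvdn_scale le_ij)).
Qed.

Definition odo_of (f : nat -> nat) (fP : forall n, f n.+1 = f n %[mod P n]) :
  odo P.
Proof.
refine (@Odo P (fun n => f n %% P n) _ _) => n.
  by rewrite ltn_pmod ?sc_pos.
by rewrite (modn_dvdm _ (sc_dvd P n)) fP.
Defined.

Definition oneg (x : odo P) : odo P.
Proof.
refine (@odo_of (fun n => P n - x n) _) => n; apply/eqP.
rewrite -(eqn_modDr (x n.+1)) subnK; last exact: ltnW (oval_lt x _).
rewrite -modnDmr oval_comp subnK; last exact: ltnW (oval_lt x _).
by rewrite modnn; exact: (sc_dvd P n).
Defined.

Definition omul (x y : odo P) : odo P.
Proof.
by refine (@odo_of (fun n => x n * y n) _) => n; rewrite -modnMm !oval_comp.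
Defined.

Lemma oaddC (x y : odo P) : oadd x y = oadd y x.
Proof. by apply: odo_ext => n /=; rewrite addnC. Qed.

Lemma oaddA (x y z : odo P) : oadd x (oadd y z) = oadd (oadd x y) z.
Proof. by apply: odo_ext => n /=; rewrite modnDml modnDmr addnA. Qed.

Lemma oadd0 (x : odo P) : oadd x (ocst P 0) = x.
Proof. by apply: odo_ext => n /=; rewrite mod0n addn0 modn_small ?oval_lt. Qed.

Lemma oaddN (x : odo P) : oadd x (oneg x) = ocst P 0.
Proof.
apply: odo_ext => n /=; rewrite modnDmr subnKC ?modnn ?mod0n //.
exact: ltnW (oval_lt x _).
Qed.

Lemma ocstD a b : ocst P (a + b) = oadd (ocst P a) (ocst P b).
Proof. by apply: odo_ext => n /=; rewrite modnDm. Qed.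

Lemma omulC (x y : odo P) : omul x y = omul y x.
Proof. by apply: odo_ext => n /=; rewrite mulnC. Qed.

Lemma omulA (x y z : odo P) : omul x (omul y z) = omul (omul x y) z.
Proof. by apply: odo_ext => n /=; rewrite modnMml modnMmr mulnA. Qed.

Lemma omul1 (x : odo P) : omul x (ocst P 1) = x.
Proof. by apply: odo_ext => n /=; rewrite modnMmr muln1 modn_small ?oval_lt. Qed.

Lemma omulDl (x y z : odo P) : omul (oadd x y) z = oadd (omul x z) (omul y z).
Proof. by apply: odo_ext => n /=; rewrite modnMml modnDm mulnDl. Qed.

Lemma otrD a b (x : odo P) : otr a (otr b x) = otr (b + a) x.
Proof. by rewrite /otr -oaddA ocstD. Qed.

Lemma otr0 (x : odo P) : otr 0 x = x.
Proof. exact: oadd0. Qed.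

Lemma oadd_cont (a : odo P) : ocont (fun x => oadd x a).
Proof. by move=> x n; exists n => y exy /=; rewrite exy. Qed.

Lemma omul_cont (a : odo P) : ocont (fun x => omul x a).
Proof. by move=> x n; exists n => y exy /=; rewrite exy. Qed.

Lemma oadd_homeo (a : odo P) : ohomeo (fun x => oadd x a).
Proof.
split; first exact: oadd_cont.
exists (fun x => oadd x (oneg a)); split; [|split; last exact: oadd_cont].
- by move=> x; rewrite -oaddA oaddN oadd0.
- by move=> x; rewrite -oaddA (oaddC (oneg a)) oaddN oadd0.
Qed.

Lemma oAut_oadd g (a : odo P) : oAut (otr g) (fun x => oadd x a).
Proof.
split; first exact: oadd_homeo.
by move=> x; rewrite /otr -!oaddA (oaddC a).
Qed.

Lemma commute_otrM (h : odo P -> odo P) g :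
  (forall x, h (otr g x) = otr g (h x)) ->
  forall j x, h (otr (j * g) x) = otr (j * g) (h x).
Proof.
move=> hg; elim=> [|j IHj] x; first by rewrite mul0n !otr0.
by rewrite mulSn -otrD IHj hg otrD.
Qed.

Lemma oAut_otrM j g h : oAut (@otr P g) h -> oAut (otr (j * g)) h.
Proof. by case=> hh hg; split=> //; apply: commute_otrM. Qed.

(* [y] lies in the closure of the multiples of [g]. *)
Definition approx_mul (g : nat) (y : odo P) :=
  forall N, exists j, j * g = y N %[mod P N].

Lemma oadd_commute_approx (h : odo P -> odo P) g y :
  ocont h -> (forall x, h (otr g x) = otr g (h x)) -> approx_mul g y ->
  forall x, h (oadd x y) = oadd (h x) y.
Proof.
move=> hc hg yg x; apply: odo_ext => n.
have [N hN] := hc (oadd x y) n.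
have [j ej] := yg (maxn N n).
have jy i : i <= maxn N n -> (j * g) %% P i = y i.
  move=> le_i; rewrite -(modn_dvdm _ (dvdn_scale le_i)) ej.
  by rewrite modn_dvdm ?dvdn_scale ?oval_modn.
rewrite -(hN (otr (j * g) x)) => [|i le_iN].
  by rewrite commute_otrM //= jy ?leq_maxr.
by rewrite /= jy // (leq_trans le_iN) ?leq_maxl.
Qed.

Lemma approx_mul_omul g (z : odo P) : approx_mul g (omul z (ocst P g)).
Proof. by move=> N; exists (z N); rewrite /= modnMmr modn_mod. Qed.

Lemma approx_mul_unit g u y : omul (ocst P g) u = ocst P 1 -> approx_mul g y.
Proof.
move=> gu; have -> : y = omul (omul y u) (ocst P g).
  by rewrite -omulA (omulC u) gu omul1.
exact: approx_mul_omul.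
Qed.

Lemma oAut_otr_unit g u h : omul (ocst P g) u = ocst P 1 ->
  oAut (otr g) h -> h = (fun x => oadd x (h (ocst P 0))).
Proof.
move=> gu [[hc _] hg]; apply: functional_extensionality => x.
by rewrite -{1}[x]oadd0 oaddC (oadd_commute_approx hc hg (approx_mul_unit _ gu)) oaddC.
Qed.

Lemma oAut_otr_approx g g' h :
  approx_mul g (ocst P g') -> oAut (@otr P g) h -> oAut (otr g') h.
Proof.
by move=> gg' [hh hg]; split=> // x; apply: (oadd_commute_approx hh.1 hg gg').
Qed.

Lemma approx_mul_scale g k : (forall N, k <= N -> coprime g (P N %/ P k)) ->
  approx_mul (g * P k) (ocst P (P k)).
Proof.
move=> g_cop N; rewrite /= modn_mod.
have [le_Nk|lt_kN] := leqP N k.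
  by exists 0; apply/esym/eqP; rewrite mul0n mod0n; exact: dvdn_scale.
have dvd_kN := dvdn_scale (ltnW lt_kN).
have q_gt0 : 0 < P N %/ P k by rewrite divn_gt0 ?sc_pos // dvdn_leq ?sc_pos.
have g_inv := expn_totient_inverse q_gt0 (g_cop N (ltnW lt_kN)).
set q := P N %/ P k in q_gt0 g_inv; set z := _ ^ _ in g_inv.
by exists z; rewrite -(divnK dvd_kN) -/q mulnA -muln_modl g_inv muln_modl mul1n.
Qed.

End Odometer.

Section CoprimeTranslation.
Variables (P : scale) (m : nat).
Hypothesis coprime_m : forall n, coprime m (P n).

Lemma ocst_unit : exists u, omul (ocst P m) u = ocst P 1.
Proof.
have inv n : m ^ (totient (P n)).-1 * m = 1 %[mod P n].
  exact: expn_totient_inverse (sc_pos P n) (coprime_m n).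
have inv_compat n : m ^ (totient (P n.+1)).-1 = m ^ (totient (P n)).-1 %[mod P n].
  apply: inverse_modn_uniq (inv n).
  by rewrite -(modn_dvdm _ (sc_dvd P n)) inv modn_dvdm ?sc_dvd.
exists (odo_of inv_compat); apply: odo_ext => n /=.
by rewrite modnMm mulnC inv.
Qed.

Lemma otr_coprime_conj : oconj (@otr P m) (@otr P 1).
Proof.
have [u mu] := ocst_unit.
exists (fun x => omul x u); split.
  split; first exact: omul_cont.
  exists (fun x => omul x (ocst P m)); split; [|split; last exact: omul_cont].
  - by move=> x; rewrite -omulA (omulC u) mu omul1.
  - by move=> x; rewrite -omulA mu omul1.
by move=> x; rewrite /otr omulDl mu.
Qed.

Lemma Aut_otr_coprime_iso : Aut_iso_odo (@otr P m).
Proof.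
have [u mu] := ocst_unit.
exists (fun a x => oadd x a); split; [exact: oAut_oadd|split; [|split]].
- by move=> h /(oAut_otr_unit mu) ->; exists (h (ocst P 0)).
- move=> a b /(congr1 (fun f => f (ocst P 0))).
  by rewrite !(oaddC (ocst P 0)) !oadd0.
- by move=> a b; apply: functional_extensionality => x /=; rewrite (oaddC a) oaddA.
Qed.

End CoprimeTranslation.

Definition eventually (Q : nat -> Prop) := exists N, forall n, N <= n -> Q n.

Lemma eventually_all (T : eqType) (s : seq T) (Q : T -> nat -> Prop) :
  (forall a, a \in s -> eventually (Q a)) ->
  eventually (fun n => forall a, a \in s -> Q a n).
Proof.
elim: s => [|a s IHs] Qs; first by exists 0.
have [Na hNa] := Qs a (mem_head a s).
have [Ns hNs] := IHs (fun b bs => Qs b (mem_behead (s := a :: s) bs)).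
exists (maxn Na Ns) => n; rewrite geq_max => /andP [le_a le_s] b.
by rewrite in_cons => /predU1P [->|bs]; [exact: hNa | exact: hNs].
Qed.

Lemma nondecreasing_bounded_stable (f : nat -> nat) B :
  {homo f : i j / i <= j} -> (forall n, f n < B) ->
  exists e, eventually (fun n => f n = e).
Proof.
move=> f_mono; elim: B => [|B IHB] f_lt; first by have := f_lt 0.
have [[n0 fn0]|no_B] := classic (exists n0, f n0 = B).
  by exists B, n0 => n le_n; apply/eqP; rewrite eqn_leq -ltnS f_lt -{1}fn0 f_mono.
apply: IHB => n; rewrite ltn_neqAle -ltnS f_lt andbT.
by apply/eqP => fnB; apply: no_B; exists n.
Qed.

Lemma logn_prod_primes q (s : seq nat) (f : nat -> nat) :
  prime q -> uniq s -> all prime s ->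
  logn q (\prod_(a <- s) a ^ f a) = if q \in s then f q else 0.
Proof.
move=> q_pr; elim: s => [|a s IHs] /=; first by rewrite big_nil logn1.
case/andP=> a_s s_uniq /andP [a_pr s_pr]; rewrite big_cons lognM; first last.
- by rewrite big_seq prodn_cond_gt0 // => b bs; rewrite expn_gt0 prime_gt0 ?(allP s_pr).
- by rewrite expn_gt0 prime_gt0.
rewrite lognX logn_prime // IHs // in_cons.
by case: eqP => [->|_] /=; rewrite ?muln0 // (negbTE a_s) muln1 addn0.
Qed.

Lemma dvdn_logn d n : 0 < d -> 0 < n ->
  (forall p, prime p -> logn p d <= logn p n) -> d %| n.
Proof.
move=> d_gt0 n_gt0 le_log; apply/dvdn_partP => // p.
by rewrite mem_primes => /andP [p_pr _]; rewrite p_part pfactor_dvdn ?le_log.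
Qed.

Lemma emin_le b v : emin b v <= b.
Proof. by case: v => [e|] //=; exact: geq_minl. Qed.

Section Valuations.
Variable P : scale.

Lemma logn_scale_mono a i j : i <= j -> logn a (P i) <= logn a (P j).
Proof. by move=> le_ij; apply: dvdn_leq_log; [exact: sc_pos | exact: dvdn_scale]. Qed.

Lemma vp_eventually a b : eventually (fun n =>
  emin b (vp P a) <= logn a (P n) /\
  (emin b (vp P a) < b -> logn a (P n) = emin b (vp P a))).
Proof.
rewrite /vp; case: excluded_middle_informative => [stable|unbounded].
  case: (constructive_indefinite_description _ stable) => e [N eN] /=.
  exists N => n le_Nn; rewrite eN //; split; first exact: geq_minr.
  by rewrite gtn_min ltnn => /ltnW /minn_idPr ->.
have [[K bK]|no_b] := classic (exists K, b <= logn a (P K)).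
  exists K => n le_Kn /=; split; last by rewrite ltnn.
  exact: leq_trans bK (logn_scale_mono a le_Kn).
case: unbounded; apply: (@nondecreasing_bounded_stable _ b (logn_scale_mono a)) => n.
by rewrite ltnNge; apply/negP => bn; apply: no_b; exists n.
Qed.

Variable m : nat.
Hypothesis m_gt0 : 0 < m.

Lemma logn_s_of q : prime q ->
  logn q (s_of P m) = if q \in primes m then emin (logn q m) (vp P q) else 0.
Proof.
move=> q_pr; rewrite /s_of logn_prod_primes ?primes_uniq //.
by apply/allP => a; rewrite mem_primes => /andP [].
Qed.

Lemma s_of_gt0 : 0 < s_of P m.
Proof.
rewrite /s_of big_seq prodn_cond_gt0 // => a.
by rewrite mem_primes expn_gt0 => /andP [/prime_gt0 ->].
Qed.

Lemma s_of_dvdn : s_of P m %| m.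
Proof.
apply: dvdn_logn => //; first exact: s_of_gt0.
by move=> q q_pr; rewrite logn_s_of //; case: ifP => // _; exact: emin_le.
Qed.

Lemma t_of_gt0 : 0 < t_of P m.
Proof. by rewrite divn_gt0 ?s_of_gt0 // dvdn_leq ?s_of_dvdn. Qed.

Lemma t_ofM d : s_of P m %| d -> t_of P m * d = d %/ s_of P m * m.
Proof. by move=> s_d; rewrite /t_of !divn_mulAC ?s_of_dvdn // mulnC. Qed.

Lemma stable_scale_index :
  exists k, s_of P m %| P k /\ forall N, k <= N -> coprime (t_of P m) (P N %/ P k).
Proof.
have [k hk] := @eventually_all _ (primes m) _ (fun a _ => vp_eventually a (logn a m)).
exists k; split.
  apply: dvdn_logn; [exact: s_of_gt0 | exact: sc_pos |] => q q_pr.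
  by rewrite logn_s_of //; case: ifP => // qm; exact: (hk k (leqnn k) q qm).1.
move=> N le_kN; have dvd_kN := dvdn_scale P le_kN.
rewrite coprime_has_primes ?t_of_gt0 //; last first.
  by rewrite divn_gt0 ?sc_pos // dvdn_leq ?sc_pos.
apply/hasPn => q; rewrite -!logn_gt0 => q_Q; apply/negP.
rewrite /t_of logn_div ?s_of_dvdn // subn_gt0 => lt_sm.
have qm : q \in primes m by rewrite -logn_gt0 (leq_ltn_trans _ lt_sm).
have q_pr : prime q by move: qm; rewrite mem_primes => /andP [].
move: lt_sm q_Q; rewrite logn_s_of // qm => lt_rm.
have [_ /(_ lt_rm) eN] := hk N le_kN q qm.
by have [_ /(_ lt_rm) ek] := hk k (leqnn k) q qm; rewrite logn_div // eN ek subnn.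
Qed.

End Valuations.

Theorem proposition3p1 (P : scale) (m : nat) (Hm : 0 < m) :
  ((forall n, coprime m (P n)) ->
     oconj (@otr P m) (@otr P 1) /\ Aut_iso_odo (@otr P m))
  /\
  ((exists n, gcdn m (P n) != 1) ->
     exists k : nat,
       s_of P m %| P k /\
       (forall h, oAut (@otr P m) h -> oAut (@otr P (t_of P m * P k)) h) /\
       (forall h, oAut (@otr P (t_of P m * P k)) h <-> oAut (@otr P (P k)) h)).
Proof.
split=> [m_cop | _].
  by split; [exact: otr_coprime_conj | exact: Aut_otr_coprime_iso].
have [k [s_dvd t_cop]] := stable_scale_index P Hm.
exists k; split=> //; split=> h.
  by rewrite t_ofM //; apply: oAut_otrM.
by split; [apply: oAut_otr_approx; exact: approx_mul_scale | exact: oAut_otrM].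
Qed.
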